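(* If $A\subset\mathbb{X}$ is an open set with $\eta(\partial A)=0$, then $\tau(\overline A)\le\eta(A)$.
   Context: $\mathbb{X}$ is a compact metric space. $(\xi_j)_{j\in\mathbb N}$ is a sequence of finitely additive outer probabilities on $\mathbb{X}$ (set functions on all subsets, values in $[0,1]$, finitely additive, $\xi_j(\mathbb{X})=1$). For $A\subset\mathbb{X}$, $\tau(A)=\limsup_{n\to\infty}\frac1n\sum_{j=0}^{n-1}\xi_j(A)$. For $Y\subset\mathbb{X}$ and $r>0$, $\nu_r(Y)=\inf\sum_{I\in\mathcal I}\tau(I)$ over all countable covers $\mathcal I$ of $Y$ by open sets of diameter at most $r$; $\nu(Y)=\sup_{r>0}\nu_r(Y)$; $\eta$ is the restriction of $\nu$ to the Borel $\sigma$-algebra. $\partial A$ is the topological boundary and $\overline A$ the closure. *)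

From HB Require Import structures.
From mathcomp Require Import all_boot all_order all_algebra.
From mathcomp Require Import all_classical all_reals all_analysis.
Set Implicit Arguments. Unset Strict Implicit. Unset Printing Implicit Defensive.
Import Order.TTheory GRing.Theory Num.Theory.
Local Open Scope classical_set_scope.
Local Open Scope ring_scope.

Section Defs.
Context {R : realType} {X : metricType R}.

Definition fa_outer_prob (xi : set X -> R) : Prop :=
  [/\ forall A, 0 <= xi A <= 1,
      forall A B, A `&` B = set0 -> xi (A `|` B) = xi A + xi B
    & xi setT = 1].

Definition tau (xi : nat -> set X -> R) (A : set X) : \bar R :=
  limn_esup (fun n => ((\sum_(0 <= j < n) xi j A) / n%:R)%:E).

Definition diam_le (I : set X) (r : R) : Prop :=
  forall x y, I x -> I y -> mdist x y <= r.

(* nu_r(Y): infimum over countable covers by open sets of diameter <= r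
   (a countable family is indexed by nat; finite families are padded with set0) *)
Definition nu_r (xi : nat -> set X -> R) (r : R) (Y : set X) : \bar R :=
  ereal_inf [set s : \bar R | exists I : nat -> set X,
     [/\ forall n, open (I n), forall n, diam_le (I n) r,
         Y `<=` \bigcup_n I n
       & s = (\sum_(0 <= n <oo) tau xi (I n))%E]].

Definition nu (xi : nat -> set X -> R) (Y : set X) : \bar R :=
  ereal_sup [set nu_r xi r Y | r in [set r : R | 0 < r]].

(* etaB = restriction of nu to Borel sets *)
Definition etaB (xi : nat -> set X -> R) (B : set X) : \bar R := nu xi B.

Definition bdry (A : set X) : set X := closure A `\` interior A.

End Defs.

From HB Require Import structures.
From mathcomp Require Import all_boot all_order all_algebra.
From mathcomp Require Import all_classical all_reals all_analysis.
Import Order.TTheory GRing.Theory Num.Theory.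
Local Open Scope classical_set_scope.
Local Open Scope ring_scope.

(* The closure of A lies in A together with its boundary. Fix r > 0, an
   r-cover (J n) of A and an r-cover (I n) of the boundary with
   sum_n tau (I n) < e. The open sets J n `|` I n cover the compact set
   closure A, hence finitely many of them do; tau is finitely subadditive
   (it is a limsup of averages of finitely additive set functions), so
   tau (closure A) <= sum_n tau (J n) + e. Therefore
   tau (closure A) <= nu_r A <= eta A. *)

Section limn_esup_properties.
Context {R : realType}.
Implicit Types u v : (\bar R)^nat.
Local Open Scope ereal_scope.

Lemma le_limn_esup u v : (forall n, u n <= v n) -> limn_esup u <= limn_esup v.
Proof.
move=> uv; rewrite !limn_esup_lim; apply: lee_lim; try exact: is_cvg_esups.
apply: nearW => n; apply: ge_ereal_sup => _ [k /= nk <-].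
by apply: le_trans (uv k) _; apply: ereal_sup_ubound; exists k.
Qed.

Lemma limn_esup_cst (a : \bar R) : limn_esup (fun=> a) = a.
Proof. by rewrite (cvg_limn_einf_sup (cvg_cst a)). Qed.

Lemma limn_esup_ge0 u : (forall n, 0 <= u n) -> 0 <= limn_esup u.
Proof. by move=> u0; rewrite -(limn_esup_cst 0); exact: le_limn_esup. Qed.

Lemma limn_esupD u v : limn_esup u +? limn_esup v ->
  limn_esup (u \+ v) <= limn_esup u + limn_esup v.
Proof.
rewrite !limn_esup_lim => uv; rewrite -limeD //; try exact: is_cvg_esups.
apply: lee_lim; first exact: is_cvg_esups.
  by apply: is_cvgeD => //; exact: is_cvg_esups.
apply: nearW => n; apply: ge_ereal_sup => _ [k /= nk <-].
by apply: leeD; apply: ereal_sup_ubound; exists k.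
Qed.

End limn_esup_properties.

Lemma compact_bigcup_finite_prefix {T : topologicalType} (K : set T)
    (F : nat -> set T) :
  compact K -> (forall n, open (F n)) -> K `<=` \bigcup_n F n ->
  exists N, K `<=` \bigcup_(k < N) F k.
Proof.
move=> /compact_near_coveringP cK Fo KF.
have [N _ KFN] : \forall N \near \oo, K `<=` \bigcup_(k < N) F k.
  apply: cK => x /KF [n _ Fnx].
  exists (F n, [set i | (n < i)%N]) => /=; last first.
    by case=> y i /= [Fny ni]; exists n.
  by split; [exact: open_nbhs_nbhs | exists n.+1].
by exists N; exact: (KFN N (leqnn N)).
Qed.

Section fa_outer_prob_properties.
Context {R : realType} {X : metricType R}.
Variable mu : set X -> R.
Hypothesis hmu : fa_outer_prob mu.

Lemma fa_outer_prob_ge0 A : 0 <= mu A.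
Proof. by case: hmu => h _ _; case/andP: (h A). Qed.

Lemma fa_outer_prob0 : mu set0 = 0.
Proof.
case: hmu => _ hadd _; have := hadd set0 set0; rewrite setU0 setI0.
by move=> /(_ erefl) h; apply: (addrI (mu set0)); rewrite addr0 -h.
Qed.

Lemma fa_outer_probUD A B : mu (A `|` B) = mu A + mu (B `\` A).
Proof.
by case: hmu => _ hadd _; rewrite -hadd ?setDIK // setUDr setDv setD0.
Qed.

Lemma le_fa_outer_prob A B : A `<=` B -> mu A <= mu B.
Proof.
by move=> AB; rewrite -(setUidr AB) fa_outer_probUD lerDl fa_outer_prob_ge0.
Qed.

Lemma fa_outer_probU_le A B : mu (A `|` B) <= mu A + mu B.
Proof. by rewrite fa_outer_probUD lerD2l; apply: le_fa_outer_prob => x []. Qed.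

End fa_outer_prob_properties.

Section tau_properties.
Context {R : realType} {X : metricType R}.
Variable xi : nat -> set X -> R.
Hypothesis hxi : forall j, fa_outer_prob (xi j).
Local Open Scope ereal_scope.

Lemma tau_ge0 A : 0 <= tau xi A.
Proof.
apply: limn_esup_ge0 => n; rewrite lee_fin divr_ge0 // sumr_ge0 // => j _.
exact: fa_outer_prob_ge0.
Qed.

Lemma tau0 : tau xi set0 = 0.
Proof.
rewrite -(limn_esup_cst 0); congr limn_esup; apply/funext => n.
by rewrite big1 ?mul0r // => j _; exact: fa_outer_prob0.
Qed.

Lemma le_tau A B : A `<=` B -> tau xi A <= tau xi B.
Proof.
move=> AB; apply: le_limn_esup => n.
rewrite lee_fin ler_wpM2r ?invr_ge0 // ler_sum // => j _.
exact: le_fa_outer_prob.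
Qed.

Lemma tauU_le A B : tau xi (A `|` B) <= tau xi A + tau xi B.
Proof.
have AB : tau xi A +? tau xi B by apply: ge0_adde_def; rewrite inE tau_ge0.
apply: le_trans _ (limn_esupD _ _ AB); apply: le_limn_esup => n /=.
rewrite lee_fin -mulrDl -big_split ler_wpM2r ?invr_ge0 // ler_sum // => j _.
exact: fa_outer_probU_le.
Qed.

Lemma tau_bigcup_le (F : nat -> set X) N :
  tau xi (\bigcup_(k < N) F k) <= \sum_(k < N) tau xi (F k).
Proof.
elim: N => [|N IH]; first by rewrite bigcup_mkord !big_ord0 tau0.
rewrite bigcup_mkord !big_ord_recr -bigcup_mkord /=.
exact: le_trans (tauU_le _ _) (leeD IH (lexx _)).
Qed.

Lemma compact_tau_le_series (K : set X) (F : nat -> set X) :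
  compact K -> (forall n, open (F n)) -> K `<=` \bigcup_n F n ->
  tau xi K <= \sum_(0 <= n <oo) tau xi (F n).
Proof.
move=> cK Fo KF; have [N KFN] := compact_bigcup_finite_prefix _ _ cK Fo KF.
apply: le_trans (le_tau _ _ KFN) _; apply: le_trans (tau_bigcup_le F N) _.
rewrite -(big_mkord xpredT (fun k => tau xi (F k))).
by apply: nneseries_lim_ge => n _ _; exact: tau_ge0.
Qed.

Lemma compact_tau_le_nu_r (K A B : set X) r :
  compact K -> K `<=` A `|` B -> nu_r xi r B <= 0 -> tau xi K <= nu_r xi r A.
Proof.
move=> cK KAB B0; apply: le_ereal_inf_tmp => _ [J [Jo _ AJ ->]].
apply/lee_addgt0Pr => e e0.
have /ereal_inf_lt[_ [I [Io _ BI ->]] Ie] : nu_r xi r B < e%:E.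
  by apply: le_lt_trans B0 _; rewrite lte_fin.
have KJI : tau xi K <= \sum_(0 <= n <oo) tau xi (J n `|` I n).
  apply: compact_tau_le_series => // [n|x /KAB [/AJ|/BI] [n _ ?]].
  - exact: openU.
  - by exists n => //; left.
  - by exists n => //; right.
apply: le_trans KJI _; apply: le_trans _ (leeD (lexx _) (ltW Ie)).
rewrite -nneseriesD => [|n _ _|n _ _]; try exact: tau_ge0.
by apply: lee_nneseries => [n _ _|n _]; [exact: tau_ge0|exact: tauU_le].
Qed.

End tau_properties.

Lemma nu_r_le_nu {R : realType} {X : metricType R} (xi : nat -> set X -> R)
    r (Y : set X) :
  0 < r -> (nu_r xi r Y <= nu xi Y)%E.
Proof. by move=> r0; apply: ereal_sup_ubound; exists r. Qed.

Lemma closure_subU_bdry {R : realType} {X : metricType R} (A : set X) :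
  closure A `<=` A `|` bdry A.
Proof.
move=> x clAx; have [Ax|nAx] := pselect (A x); first by left.
by right; split => // /interior_subset.
Qed.

Theorem mainTheorem12 (R : realType) (X : metricType R)
  (hX : compact [set: X])
  (xi : nat -> set X -> R) (hxi : forall j, fa_outer_prob (xi j))
  (A : set X) (hA : open A)
  (hbd : etaB xi (bdry A) = 0%E) :
  (tau xi (closure A) <= etaB xi A)%E.
Proof.
have cA : compact (closure A).
  exact: subclosed_compact (@closed_closure _ A) hX (@subsetT _ _).
have bdry_null : (nu_r xi 1 (bdry A) <= 0)%E.
  by rewrite -hbd; exact: nu_r_le_nu.
apply: le_trans _ (nu_r_le_nu xi 1 A ltr01).
exact: compact_tau_le_nu_r hxi _ _ _ _ cA (closure_subU_bdry A) bdry_null.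
Qed.
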